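(* Let $G(\mathcal V,\mathcal E)$ be a finite simple directed graph and $f\ge 0$ an integer, and assume Condition 1 holds for $G$. Let $A,B,F$ be a partition of $\mathcal V$ with $A,B$ both non-empty and $|F|\le f$. If it is not the case that $B \Rightarrow_{\mathcal V - F} A$, then there exist sets $A',B'$ such that: $A'$ and $B'$ are both non-empty; $A',B'$ form a partition of $A\cup B$; $A'\subseteq A$ and $B\subseteq B'$; and $B'\not\rightarrow A'$.
   Context: For disjoint sets $X,Y\subseteq\mathcal V$ with $Y$ non-empty, $X\rightarrow Y$ means that $X$ contains at least $f+1$ distinct nodes $i$ such that $(i,j)\in\mathcal E$ for some $j\in Y$; $X\not\rightarrow Y$ means this fails. Condition 1: for every partition $L,C,R,F$ of $\mathcal V$ (with $C$ or $F$ possibly empty) such that $L,R$ are non-empty and $|F|\le f$, either $L\cup C\rightarrow R$ or $R\cup C\rightarrow L$. An $(X,y)$-path is a directed path from some node of $X$ to the node $y\notin X$; it excludes $F$ if it contains no node of $F$; $(X,y)$-paths are disjoint if they pairwise share only $y$. For pairwise disjoint $X,Y,F$ with $|F|\le f$, $X \Rightarrow_{\mathcal V - F} Y$ means: $Y=\emptyset$, or every $y\in Y$ has at least $f+1$ pairwise disjoint $(X,y)$-paths excluding $F$. *)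

From mathcomp Require Import all_boot.
Set Implicit Arguments. Unset Strict Implicit. Unset Printing Implicit Defensive.

(* A finite simple directed graph: vertex set = finType T, edge relation e
   (e i j  <->  (i,j) is an edge), with no self-loops. *)
Definition simple_digraph (T : finType) (e : rel T) : Prop := irreflexive e.

Definition reaches (T : finType) (e : rel T) (f : nat) (X Y : {set T}) : Prop :=
  f.+1 <= #|[set i in X | [exists j in Y, e i j]]|.

Definition condition1 (T : finType) (e : rel T) (f : nat) : Prop :=
  forall L C R F : {set T},
    [disjoint L & C] -> [disjoint L & R] -> [disjoint L & F] ->
    [disjoint C & R] -> [disjoint C & F] -> [disjoint R & F] ->
    L :|: C :|: R :|: F = setT ->
    L != set0 -> R != set0 -> #|F| <= f ->
    reaches e f (L :|: C) R \/ reaches e f (R :|: C) L.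

Definition XY_path (T : finType) (e : rel T) (X : {set T}) (y : T) (p : seq T) : Prop :=
  y \notin X /\
  exists x s, [/\ p = x :: s, x \in X, path e x s, last x s = y & uniq p].

Definition excludes (T : finType) (F : {set T}) (p : seq T) : Prop :=
  all (fun v => v \notin F) p.

Definition disj_reach (T : finType) (e : rel T) (f : nat) (X Y F : {set T}) : Prop :=
  Y = set0 \/
  forall y, y \in Y ->
    exists ps : seq (seq T),
      [/\ size ps = f.+1,
          (forall p, p \in ps -> XY_path e X y p /\ excludes F p) &
          (forall i j, i < size ps -> j < size ps -> i != j ->
             forall v, v \in nth [::] ps i -> v \in nth [::] ps j -> v = y)].

From mathcomp Require Import all_boot zify.
From Stdlib Require Import Classical.
Set Implicit Arguments. Unset Strict Implicit. Unset Printing Implicit Defensive.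

(* The theorem follows from Menger's theorem, proved by induction on the number of edges:
   if deleting an edge xy drops the minimum size of an X-Y separator below k, a small
   separator S of G - xy yields the two separators S + x and S + y of G, of size k, and
   linkages from X to S + x and from S + y to Y in G - xy glue, through S and the edge xy,
   into a k-linkage of G.

   If some a in A has fewer than f + 1 disjoint (B, a)-paths avoiding F, Menger's theorem in
   the graph induced on W = (A u B) - a gives a set S, |S| <= f, separating B from the
   in-neighbours of a. Let R be the set of vertices reached from B - S inside W - S, and
   B' = (S n W) u R, A' = (A u B) - B'. An edge from R into A' would either enter a,
   contradicting the separation, or enlarge R; so every edge from B' into A' starts in S. *)

Lemma split_find_first (T : Type) (P : pred T) (s : seq T) :
  has P s -> exists a z c, [/\ s = a ++ z :: c, P z & ~~ has P a].
Proof. by case/split_find => z a c Pz Na; exists a, z, c; rewrite cat_rcons. Qed.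

Lemma split_find_last (T : Type) (P : pred T) (s : seq T) :
  has P s -> exists a z c, [/\ s = a ++ z :: c, P z & ~~ has P c].
Proof.
rewrite -has_rev -{2}[s]revK; case/split_find => z a c Pz Na.
by exists (rev c), z, (rev a); rewrite rev_cat rev_rcons has_rev.
Qed.

Lemma nth_index_mapP (A B : eqType) (a0 : A) (f : A -> B) (s : seq A) (b : B) :
  b \in map f s ->
  nth a0 s (index b (map f s)) \in s /\ f (nth a0 s (index b (map f s))) = b.
Proof.
move=> bs; have ib : index b (map f s) < size s by rewrite -(size_map f) index_mem.
by rewrite mem_nth // -(nth_map a0 (f a0)) // nth_index.
Qed.

Lemma has_setU1 (T : finType) (x : T) (S : {set T}) (p : seq T) :
  has (mem (x |: S)) p = (x \in p) || has (mem S) p.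
Proof. by rewrite -has_pred1 -has_predU; apply: eq_has => v; rewrite !inE eq_sym. Qed.

Section Paths.

(* [x0] is only the default value of [head] and [last]; walks are non-empty. *)
Variables (T : finType) (x0 : T) (e : rel T).
Implicit Types (X Y Z S : {set T}) (p : seq T).

Definition walk X Y p := [&& p != [::], sorted e p, head x0 p \in X & last x0 p \in Y].

Definition linking_path X Y p :=
  [/\ walk X Y p, uniq p, {in X, forall v, v \in p -> v = head x0 p}
    & {in Y, forall v, v \in p -> v = last x0 p}].

Definition linkage X Y k (ps : seq (seq T)) :=
  [/\ size ps = k, uniq ps, {in ps, forall p, linking_path X Y p}
    & forall p q v, p \in ps -> q \in ps -> v \in p -> v \in q -> p = q].

Definition separator X Y S := forall p, walk X Y p -> has (mem S) p.

Lemma walk_cat_cons X Y a z c :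
  walk X Y (a ++ z :: c) =
  [&& sorted e (rcons a z), path e z c, head z a \in X & last z c \in Y].
Proof. by rewrite /walk sorted_cat_cons last_cat; case: a => //= h a; rewrite -andbA. Qed.

Lemma walk_splice X Y Z Z' a z c a' c' :
  walk X Z (a ++ z :: c') -> walk Z' Y (a' ++ z :: c) -> walk X Y (a ++ z :: c).
Proof. by rewrite !walk_cat_cons => /and4P[-> _ -> _] /and4P[_ -> _ ->]. Qed.

Lemma linking_path_prefix X Y a z c :
  linking_path X Y (a ++ z :: c) -> ~~ has (mem Y) a.
Proof.
case=> _ uniq_p _ lastY; apply/hasP => -[v va vY].
have := lastY v vY; rewrite mem_cat va last_cat /= => /(_ isT) vE.
move: uniq_p; rewrite cat_uniq => /and3P[_ /hasP[]]; exists v => //.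
by rewrite vE mem_last.
Qed.

Lemma linking_path_suffix X Y a z c :
  linking_path X Y (a ++ z :: c) -> ~~ has (mem X) c.
Proof.
case=> _ uniq_p headX _; apply/hasP => -[v vc vX].
have := headX v vX; rewrite mem_cat inE vc !orbT => /(_ isT).
move: uniq_p; clear headX; case: a => [|h a] /= /andP[hN _] vh; apply/negP: hN;
  by rewrite -vh ?mem_cat ?inE vc ?orbT.
Qed.

Lemma walk_mem_head X Y p : walk X Y p -> head x0 p \in p.
Proof. by case: p => // u s _; rewrite mem_head. Qed.

Lemma walk_mem_last X Y p : walk X Y p -> last x0 p \in p.
Proof. by case: p => // u s _; rewrite /= mem_last. Qed.

Lemma sorted_cat_edge p q : p != [::] -> q != [::] ->
  sorted e p -> sorted e q -> e (last x0 p) (head x0 q) -> sorted e (p ++ q).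
Proof. by case: p => // u s _; case: q => // w t _ /= ps pt ew; rewrite cat_path ps /= ew. Qed.

Lemma sorted_cat_behead p q : p != [::] ->
  sorted e p -> sorted e q -> last x0 p = head x0 q -> sorted e (p ++ behead q).
Proof.
case: p => // u s _; case: q => [|w t] /= ps pt; first by rewrite cats0.
by move=> lw; rewrite cat_path ps lw.
Qed.

Lemma linkage_cover X Y Z k ps (f : seq T -> T) :
  linkage X Y k ps -> #|Z| = k -> {in ps, forall p, f p \in p /\ f p \in Z} ->
  {subset Z <= map f ps}.
Proof.
case=> size_ps uniq_ps _ disj cardZ fP.
have uniq_f : uniq (map f ps).
  rewrite map_inj_in_uniq // => p q pps qps fpq.
  by apply: (disj p q (f p)) => //; [case: (fP p pps) | rewrite fpq; case: (fP q qps)].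
have sub_f : {subset map f ps <= Z} by move=> v /mapP[p /fP[_ ?] ->].
have /subset_cardP eqZ : #|map f ps| = #|Z| by rewrite (card_uniqP uniq_f) size_map size_ps cardZ.
by move=> v vZ; rewrite (eqZ (appP subsetP idP sub_f)).
Qed.

End Paths.

Lemma sub_linkage (T : finType) (x0 : T) (e e' : rel T) X Y k ps :
  subrel e e' -> linkage x0 e X Y k ps -> linkage x0 e' X Y k ps.
Proof.
move=> ee' [size_ps uniq_ps link disj]; split=> // p /link[walk_p uniq_p headX lastY].
by split=> //; case/and4P: walk_p => ne sorted_p hX lY; rewrite /walk ne hX lY (sub_sorted ee').
Qed.

Lemma sub_walk (T : finType) (x0 : T) (e e' : rel T) (X X' Y Y' : {set T}) p :
  subrel e e' -> X \subset X' -> Y \subset Y' -> walk x0 e X Y p -> walk x0 e' X' Y' p.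
Proof.
move=> ee' /subsetP XX' /subsetP YY' /and4P[ne sorted_p hX lY].
by rewrite /walk ne (sub_sorted ee') // XX' // YY'.
Qed.

Lemma menger_edgeless (T : finType) (x0 : T) (e : rel T) X Y k :
  (forall u v, ~~ e u v) -> (forall S, separator x0 e X Y S -> k <= #|S|) ->
  exists ps, linkage x0 e X Y k ps.
Proof.
move=> no_edge sep_large.
have /sep_large k_le : separator x0 e X Y (X :&: Y).
  case=> [|u [|v s]] //; rewrite /walk /= ?(negbTE (no_edge _ _)) // => /andP[uX uY].
  by rewrite inE uX uY.
exists [seq [:: v] | v <- take k (enum (X :&: Y))]; split.
- by rewrite size_map size_takel // -cardE.
- by rewrite map_inj_uniq ?take_uniq ?enum_uniq // => v w [].
- move=> p /mapP[v /mem_take]; rewrite mem_enum inE => /andP[vX vY] ->.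
  by split=> //; [rewrite /walk /= vX vY | move=> u _; rewrite inE => /eqP ->..].
- by move=> p q z /mapP[v _ ->] /mapP[w _ ->]; rewrite !inE => /eqP -> /eqP ->.
Qed.

Definition del_edge (T : eqType) (e : rel T) (x y : T) : rel T :=
  [rel u v | e u v && ((u, v) != (x, y))].

Section DeleteEdgePaths.

Variables (T : eqType) (e : rel T) (x y : T).

Lemma del_edge_sub : subrel (del_edge e x y) e.
Proof. by move=> u v /andP[]. Qed.

Lemma path_del_edge_src u s :
  path e u s -> x \notin belast u s -> path (del_edge e x y) u s.
Proof.
elim: s u => //= v s IH u /andP[euv path_s]; rewrite inE negb_or => /andP[ux xs].
by rewrite /del_edge /= euv xpair_eqE eq_sym (negbTE ux) IH.
Qed.

Lemma path_del_edge_tgt u s :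
  path e u s -> y \notin s -> path (del_edge e x y) u s.
Proof.
elim: s u => //= v s IH u /andP[euv path_s]; rewrite inE negb_or => /andP[yv ys].
by rewrite /del_edge /= euv xpair_eqE [v == y]eq_sym (negbTE yv) andbF IH.
Qed.

Lemma sorted_del_edge_rcons a z :
  sorted e (rcons a z) -> x \notin a -> sorted (del_edge e x y) (rcons a z).
Proof. by case: a => // h a /path_del_edge_src; rewrite belast_rcons. Qed.

End DeleteEdgePaths.

Section MengerDeleteEdge.

Variables (T : finType) (x0 : T) (e : rel T) (x y : T) (X Y S : {set T}) (k : nat).
Local Notation e' := (del_edge e x y).
Local Notation Sx := (x |: S).
Local Notation Sy := (y |: S).

Hypothesis exy : e x y.
Hypothesis sep_large : forall S', separator x0 e X Y S' -> k <= #|S'|.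
Hypothesis sepS : separator x0 e' X Y S.
Hypothesis small_S : #|S| < k.
Hypothesis IH : forall X' Y', (forall S', separator x0 e' X' Y' S' -> k <= #|S'|) ->
  exists ps, linkage x0 e' X' Y' k ps.

Lemma separator_Sx : separator x0 e X Y Sx.
Proof.
case=> [|u s] // walk_p; rewrite has_setU1; case: (boolP (x \in _)) => // xNp.
apply: sepS; move: walk_p; rewrite /walk /= => /and3P[path_s -> ->].
by rewrite path_del_edge_src //; apply: contra xNp => /mem_belast.
Qed.

Lemma separator_Sy : separator x0 e X Y Sy.
Proof.
case=> [|u s] // walk_p; rewrite has_setU1; case: (boolP (y \in _)) => // yNp.
apply: sepS; move: walk_p; rewrite /walk /= => /and3P[path_s -> ->].
by rewrite path_del_edge_tgt //; apply: contra yNp => ys; rewrite inE ys orbT.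
Qed.

Lemma separator_setU1 v : separator x0 e X Y (v |: S) -> v \notin S /\ #|v |: S| = k.
Proof. by move=> /sep_large; rewrite cardsU1; case: (v \in S) => /= k_le; split=> //; lia. Qed.

Lemma x_notin_S : x \notin S. Proof. by case: (separator_setU1 separator_Sx). Qed.
Lemma y_notin_S : y \notin S. Proof. by case: (separator_setU1 separator_Sy). Qed.
Lemma card_Sy : #|Sy| = k. Proof. by case: (separator_setU1 separator_Sy). Qed.

Lemma linkage_to_Sx : exists ps, linkage x0 e' X Sx k ps.
Proof.
apply: IH => S' sepS'; apply: sep_large => p walk_p.
have [a [z [c [Ep zSx]]]] := split_find_first (separator_Sx walk_p).
rewrite Ep has_setU1 negb_or => /andP[xNa _]; move: walk_p; rewrite Ep walk_cat_cons.
case/and4P=> sorted_az _ hX _; have walk_az : walk x0 e' X Sx (rcons a z).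
  by rewrite -cats1 walk_cat_cons /= sorted_del_edge_rcons //= hX (zSx : z \in Sx).
by rewrite -cat_rcons has_cat sepS'.
Qed.

Lemma linkage_from_Sy : exists ps, linkage x0 e' Sy Y k ps.
Proof.
apply: IH => S' sepS'; apply: sep_large => p walk_p.
have [a [z [c [Ep zSy]]]] := split_find_last (separator_Sy walk_p).
rewrite Ep has_setU1 negb_or => /andP[yNc _]; move: walk_p; rewrite Ep walk_cat_cons.
case/and4P=> _ path_zc _ lY; have walk_zc : walk x0 e' Sy Y (z :: c).
  by rewrite /walk /= path_del_edge_tgt // (zSy : z \in Sy).
by rewrite has_cat (sepS' _ walk_zc) orbT.
Qed.

Lemma hit_separator a z c : walk x0 e' X Y (a ++ z :: c) ->
  ~~ has (mem S) a -> ~~ has (mem S) c -> z \in S.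
Proof. by move=> /sepS; rewrite has_cat /= => /or3P[Ha|->|Hc] //; rewrite ?Ha ?Hc. Qed.

Section Glue.

Variables PF QF : seq (seq T).
Hypothesis linkPF : linkage x0 e' X Sx k PF.
Hypothesis linkQF : linkage x0 e' Sy Y k QF.

Lemma PF_prefix a z c : a ++ z :: c \in PF -> ~~ has (mem S) a.
Proof.
case: linkPF => _ _ link _ /link/linking_path_prefix.
by rewrite has_setU1 negb_or => /andP[].
Qed.

Lemma QF_suffix a z c : a ++ z :: c \in QF -> ~~ has (mem S) c.
Proof.
case: linkQF => _ _ link _ /link/linking_path_suffix.
by rewrite has_setU1 negb_or => /andP[].
Qed.

Lemma QF_behead Q : Q \in QF -> ~~ has (mem S) (behead Q).
Proof. by case: Q => // u t; apply: (@QF_suffix [::]). Qed.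

Lemma PF_QF_meet P Q z : P \in PF -> Q \in QF -> z \in P -> z \in Q ->
  [/\ z \in S, z = last x0 P & z = head x0 Q].
Proof.
move=> Pin Qin zP zQ.
case: linkPF linkQF => _ _ /(_ _ Pin)[wP _ _ lastSx] _ [_ _ /(_ _ Qin)[wQ _ headSy _] _].
have zS : z \in S.
  case/splitPr: zP Pin wP => a a' Pin wP; case/splitPr: zQ Qin wQ => c' c Qin wQ.
  exact: hit_separator (walk_splice wP wQ) (PF_prefix Pin) (QF_suffix Qin).
by split; [|apply: lastSx|apply: headSy]; rewrite // inE zS orbT.
Qed.

Lemma PF_meets_target P z : P \in PF -> z \in P -> z \in Y -> z \in S.
Proof.
case: linkPF => _ _ link _ Pin zP zY; have [wP _ _ _] := link _ Pin.
case/splitPr: zP Pin wP => a c Pin wP.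
apply: (@hit_separator a z [::]) (PF_prefix Pin) _ => //.
by apply: (walk_splice (Z' := Y) (a' := [::]) wP); rewrite /walk /= zY.
Qed.

Lemma QF_meets_source Q z : Q \in QF -> z \in Q -> z \in X -> z \in S.
Proof.
case: linkQF => _ _ link _ Qin zQ zX; have [wQ _ _ _] := link _ Qin.
case/splitPr: zQ Qin wQ => a c Qin wQ.
apply: (@hit_separator [::] z c) _ _ (QF_suffix Qin) => //.
by apply: (walk_splice (Z := X) (c' := [::]) _ wQ); rewrite /walk /= zX.
Qed.

Lemma Sy_heads : {subset Sy <= map (head x0) QF}.
Proof.
apply: linkage_cover linkQF card_Sy _ => Q Qin.
case: linkQF => _ _ /(_ Q Qin)[wQ _ _ _] _.
by rewrite (walk_mem_head wQ); case/and4P: wQ.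
Qed.

(* A path of PF ending at v in S continues along the path of QF starting at v; the one
   ending at x continues through the deleted edge xy. *)
Let to_Sy v := if v == x then y else v.

Let partner P := nth [::] QF (index (to_Sy (last x0 P)) (map (head x0) QF)).

Let glue P := P ++ (if last x0 P == x then partner P else behead (partner P)).

Lemma to_Sy_S v : to_Sy v \in S -> to_Sy v = v.
Proof. by rewrite /to_Sy; case: eqP => // _ yS; move: y_notin_S; rewrite yS. Qed.

Lemma to_Sy_inj : {in Sx &, injective to_Sy}.
Proof.
move=> v w; rewrite /to_Sy !inE; case: eqP => [->|_]; case: eqP => [->|_] //= vS wS vw;
  by move: y_notin_S; rewrite ?vw ?wS // -vw vS.
Qed.

Lemma PF_last P : P \in PF -> last x0 P \in Sx /\ last x0 P \in P.
Proof.
move=> Pin; case: linkPF => _ _ /(_ P Pin)[wP _ _ _] _.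
by rewrite (walk_mem_last wP); case/and4P: wP.
Qed.

Lemma PF_last_inj : {in PF &, injective (last x0)}.
Proof.
case: linkPF => _ _ _ disj P P' Pin P'in eq_last.
apply: (disj _ _ _ Pin P'in (PF_last Pin).2).
by rewrite eq_last; apply: (PF_last P'in).2.
Qed.

Lemma partnerP P : P \in PF ->
  partner P \in QF /\ head x0 (partner P) = to_Sy (last x0 P).
Proof.
move=> /PF_last[lastSx _]; apply: nth_index_mapP; apply: Sy_heads.
by move: lastSx; rewrite /to_Sy !inE; case: eqP => _ /=; rewrite ?eqxx // => ->; rewrite orbT.
Qed.

Lemma glue_linking_path P Q R : P \in PF -> Q \in QF ->
  sorted e (P ++ R) -> {subset R <= Q} -> uniq R -> ~~ has (mem S) R ->
  last x0 (P ++ R) = last x0 Q -> {in S, forall z, z \in P -> z \in Q} ->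
  linking_path x0 e X Y (P ++ R).
Proof.
move=> Pin Qin sorted_PR RQ uniq_R NR lastPR PSQ.
case: linkPF linkQF => _ _ /(_ _ Pin)[wP uniq_P headX _] _ [_ _ /(_ _ Qin)[wQ _ _ lastY] _].
have [ne_P _ hP _] := and4P wP; have [_ _ _ lQ] := and4P wQ.
have headPR : head x0 (P ++ R) = head x0 P by case: (P) ne_P.
split.
- by rewrite /walk headPR lastPR hP lQ sorted_PR andbT; case: (P) ne_P.
- rewrite cat_uniq uniq_P uniq_R andbT; apply/hasP => -[z zR zP].
  have [zS _ _] := PF_QF_meet Pin Qin zP (RQ _ zR).
  by case/hasP: NR; exists z.
- move=> z zX; rewrite mem_cat headPR => /orP[zP|zR]; first exact: headX.
  by case/hasP: NR; exists z => //; apply: QF_meets_source Qin (RQ _ zR) zX.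
- move=> z zY; rewrite mem_cat lastPR => /orP[zP|zR]; last exact: lastY _ zY (RQ _ zR).
  exact: lastY _ zY (PSQ _ (PF_meets_target Pin zP zY) zP).
Qed.

Lemma glue_linking P : P \in PF -> linking_path x0 e X Y (glue P).
Proof.
move=> Pin; have [Qin headQ] := partnerP Pin; rewrite /glue.
move: (partner P) Qin headQ => Q Qin headQ.
case: linkPF linkQF => _ _ /(_ _ Pin)[wP _ _ lastSx] _ [_ _ /(_ _ Qin)[wQ uniq_Q headSy _] _].
have [ne_P sorted_P _ _] := and4P wP; have [ne_Q sorted_Q _ _] := and4P wQ.
have sorted_eP := sub_sorted (@del_edge_sub _ e x y) sorted_P.
have sorted_eQ := sub_sorted (@del_edge_sub _ e x y) sorted_Q.
have lastP_S z : z \in S -> z \in P -> z = last x0 P.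
  by move=> zS; apply: lastSx; rewrite inE zS orbT.
move: headQ; rewrite /to_Sy; case: eqP => [lastPx headQ | _ headQ].
  apply: (glue_linking_path (Q := Q)) => //.
  - by apply: (sorted_cat_edge (x0 := x0)); rewrite ?lastPx ?headQ.
  - by have := QF_behead Qin; case: (Q) headQ => //= u t -> /negbTE->; rewrite orbF y_notin_S.
  - by case: (Q) ne_Q => // u t; rewrite last_cat.
  - by move=> z zS /(lastP_S z zS) zx; move: x_notin_S; rewrite -lastPx -zx zS.
apply: (glue_linking_path (Q := Q)) => //.
- by apply: (sorted_cat_behead (x0 := x0)).
- exact: mem_behead.
- by case: (Q) uniq_Q => //= u t /andP[].
- exact: QF_behead.
- by case: (Q) ne_Q headQ => //= u t _ ->; rewrite last_cat.
- by move=> z zS /(lastP_S z zS) ->; rewrite -headQ (walk_mem_head wQ).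
Qed.

Lemma mem_glue P z : z \in glue P -> z \in P \/ z \in partner P.
Proof. by rewrite /glue mem_cat; case: ifP => _ /orP[|zQ]; auto; right; apply: mem_behead. Qed.

Lemma glue_cross P P' z : P \in PF -> P' \in PF -> z \in P -> z \in partner P' -> P = P'.
Proof.
move=> Pin P'in zP zQ'; have [Q'in headQ'] := partnerP P'in.
have [zS zlast zhead] := PF_QF_meet Pin Q'in zP zQ'.
apply: PF_last_inj => //; rewrite -zlast zhead headQ' to_Sy_S //.
by rewrite -headQ' -zhead.
Qed.

Lemma glue_disjoint P P' z : P \in PF -> P' \in PF ->
  z \in glue P -> z \in glue P' -> P = P'.
Proof.
move=> Pin P'in /mem_glue[zP|zQ] /mem_glue[zP'|zQ'].
- by case: linkPF => _ _ _ disj; apply: disj zP zP'.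
- exact: glue_cross zP zQ'.
- exact/esym/(glue_cross P'in Pin zP' zQ).
have [Qin headQ] := partnerP Pin; have [Q'in headQ'] := partnerP P'in.
case: linkQF => _ _ _ disj; have eqQ := disj _ _ _ Qin Q'in zQ zQ'.
have [[lastSx _] [lastSx' _]] := (PF_last Pin, PF_last P'in).
by apply: PF_last_inj => //; apply: to_Sy_inj => //; rewrite -headQ -headQ' eqQ.
Qed.

Lemma glue_linkage : linkage x0 e X Y k (map glue PF).
Proof.
case: linkPF => size_PF uniq_PF _ _.
have last_glue P : P \in PF -> last x0 P \in glue P.
  by move=> /PF_last[_ lastP]; rewrite mem_cat lastP.
split.
- by rewrite size_map.
- rewrite map_inj_in_uniq // => P P' Pin P'in eq_glue.
  by apply: (glue_disjoint Pin P'in (last_glue P Pin)); rewrite -eq_glue last_glue.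
- by move=> _ /mapP[P Pin ->]; apply: glue_linking.
- move=> _ _ z /mapP[P Pin ->] /mapP[P' P'in ->] zP zP'.
  by rewrite (glue_disjoint Pin P'in zP zP').
Qed.

End Glue.

Lemma menger_del_edge : exists ps, linkage x0 e X Y k ps.
Proof.
have [PF linkPF] := linkage_to_Sx; have [QF linkQF] := linkage_from_Sy.
by eexists; apply: glue_linkage linkPF linkQF.
Qed.

End MengerDeleteEdge.

Theorem menger (T : finType) (x0 : T) (e : rel T) (X Y : {set T}) k :
  (forall S, separator x0 e X Y S -> k <= #|S|) -> exists ps, linkage x0 e X Y k ps.
Proof.
have [n] := ubnP #|[set uv : T * T | e uv.1 uv.2]|.
elim: n => // n IH in e X Y * => edges_lt sep_large.
case: (pickP [pred uv : T * T | e uv.1 uv.2]) => [[x y] /= exy | no_edge]; last first.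
  by apply: menger_edgeless sep_large => u v; move: (no_edge (u, v)) => /= ->.
have IH' X' Y' : (forall S, separator x0 (del_edge e x y) X' Y' S -> k <= #|S|) ->
    exists ps, linkage x0 (del_edge e x y) X' Y' k ps.
  apply: IH; rewrite -ltnS; apply: leq_ltn_trans edges_lt; apply: proper_card.
  apply/properP; split; first by apply/subsetP => uv; rewrite !inE => /andP[].
  by exists (x, y); rewrite !inE /= /del_edge /= ?exy ?eqxx.
case: (classic (forall S, separator x0 (del_edge e x y) X Y S -> k <= #|S|)) => [large|].
  by have [ps link] := IH' X Y large; exists ps; apply: sub_linkage link; apply: del_edge_sub.
move=> /not_all_ex_not[S] /(imply_to_and (separator _ _ _ _ S))[sepS /negP].
rewrite -ltnNge => small_S.
exact: menger_del_edge exy sep_large sepS small_S IH'.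
Qed.

Definition induced (T : finType) (e : rel T) (W : {set T}) : rel T :=
  [rel u v | [&& u \in W, v \in W & e u v]].

Lemma induced_sub (T : finType) (e : rel T) (W : {set T}) : subrel (induced e W) e.
Proof. by move=> u v /and3P[]. Qed.

Lemma induced_subset (T : finType) (e : rel T) (W W' : {set T}) :
  W \subset W' -> subrel (induced e W) (induced e W').
Proof. by move=> /subsetP WW' u v /and3P[/WW' uW /WW' vW euv]; apply/and3P. Qed.

Lemma path_induced_sub (T : finType) (e : rel T) (W : {set T}) u s :
  path (induced e W) u s -> {subset s <= W}.
Proof.
elim: s u => //= v s IH u /andP[/and3P[_ vW _] /IH sW] w.
by rewrite inE => /orP[/eqP ->|/sW].
Qed.

Lemma walk_induced_sub (T : finType) (x0 : T) (e : rel T) (W X Y : {set T}) p :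
  Y \subset W -> walk x0 (induced e W) X Y p -> {subset p <= W}.
Proof.
move=> /subsetP YW; case: p => // u [|v s] /and4P[_ /= path_s _ lY] w.
  by rewrite inE => /eqP ->; apply: YW.
rewrite inE => /orP[/eqP ->|]; last exact: (path_induced_sub (path_s : path _ u (v :: s))).
by case/andP: path_s => /and3P[].
Qed.

Definition reach_set (T : finType) (e : rel T) (W B : {set T}) : {set T} :=
  [set v | [exists b in B, connect (induced e W) b v]].

Section ReachSet.

Variables (T : finType) (e : rel T) (W B : {set T}).

Lemma sub_reach_set : B \subset reach_set e W B.
Proof. by apply/subsetP => b bB; rewrite inE; apply/existsP; exists b; rewrite bB connect0. Qed.

Lemma reach_set_sub : B \subset W -> reach_set e W B \subset W.
Proof.
move=> /subsetP BW; apply/subsetP => v; rewrite inE => /existsP[b /andP[bB]].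
case/connectP=> p path_p ->; have := mem_last b p; rewrite inE => /orP[/eqP ->|].
  exact: BW.
exact: (path_induced_sub (path_p : path (induced e W) b p)).
Qed.

Lemma reach_set_edge u v : B \subset W ->
  u \in reach_set e W B -> v \in W -> e u v -> v \in reach_set e W B.
Proof.
move=> BW uR vW euv; have uW := subsetP (reach_set_sub BW) u uR.
move: uR; rewrite !inE => /existsP[b /andP[bB bu]]; apply/existsP; exists b.
by rewrite bB; apply: connect_trans bu (connect1 _); apply/and3P.
Qed.

Lemma reach_set_walk (x0 : T) v : v \in reach_set e W B ->
  exists2 p, walk x0 (induced e W) B [set v] p & {subset p <= B :|: W}.
Proof.
rewrite inE => /existsP[b /andP[bB /connectP[p path_p ->]]].
exists (b :: p); first by rewrite /walk /= path_p bB inE eqxx.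
move=> w; rewrite inE !inE => /orP[/eqP ->|/(path_induced_sub path_p) wW].
  by rewrite bB.
by rewrite wW orbT.
Qed.

End ReachSet.

Section Cut.

Variables (T : finType) (e : rel T) (f : nat) (A B : {set T}) (a : T).
Hypotheses (aA : a \in A) (dAB : [disjoint A & B]).

Let W := (A :|: B) :\ a.
Let Y := [set u in W | e u a].

Lemma aNB : a \notin B.
Proof. by rewrite (disjointFr dAB aA). Qed.

Lemma aNW : a \notin W.
Proof. by rewrite !inE eqxx. Qed.

Lemma B_sub_W : B \subset W.
Proof.
apply/subsetP => b bB; rewrite !inE bB orbT andbT.
by apply: contraNneq aNB => <-.
Qed.

Lemma Y_sub_W : Y \subset W.
Proof. by apply/subsetP => v; rewrite inE => /andP[]. Qed.

Lemma XY_path_rcons p : linking_path a (induced e W) B Y p -> XY_path e B a (rcons p a).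
Proof.
case=> walk_p uniq_p _ _; split; first exact: aNB.
have pW := walk_induced_sub Y_sub_W walk_p.
case: p walk_p uniq_p pW => // h t /and4P[_ /= path_t hB lY] uniq_p pW.
exists h, (rcons t a); split=> //.
- rewrite rcons_path (sub_path (@induced_sub _ e W) path_t).
  by move: lY; rewrite inE => /andP[].
- by rewrite last_rcons.
- rewrite -[_ && _]/(uniq (rcons (h :: t) a)) rcons_uniq (uniq_p : uniq (h :: t)) andbT.
  by apply: contra aNW => /pW.
Qed.

Lemma XY_paths_of_linkage (F : {set T}) ps :
  [disjoint A & F] -> [disjoint B & F] -> linkage a (induced e W) B Y f.+1 ps ->
  exists ps' : seq (seq T),
    [/\ size ps' = f.+1,
        (forall p, p \in ps' -> XY_path e B a p /\ excludes F p) &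
        (forall i j, i < size ps' -> j < size ps' -> i != j ->
           forall v, v \in nth [::] ps' i -> v \in nth [::] ps' j -> v = a)].
Proof.
move=> dAF dBF [size_ps uniq_ps link disj]; exists [seq rcons p a | p <- ps]; split.
- by rewrite size_map.
- move=> _ /mapP[p pin ->]; split; first exact/XY_path_rcons/link.
  have [walk_p _ _ _] := link p pin; have pW := walk_induced_sub Y_sub_W walk_p.
  rewrite /excludes all_rcons (disjointFr dAF aA); apply/allP => v /pW.
  by rewrite !inE => /andP[_ /orP[/(disjointFr dAF)|/(disjointFr dBF)] ->].
- move=> i j; rewrite size_map => ilt jlt ij v.
  rewrite !(nth_map [::]) // !mem_rcons !inE; case: eqP => //= _ vi vj.
  have := disj _ _ _ (mem_nth [::] ilt) (mem_nth [::] jlt) vi vj.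
  by move/eqP; rewrite nth_uniq // (negbTE ij).
Qed.

Section CutAtSeparator.

Variable S : {set T}.
Hypothesis sepS : separator a (induced e W) B Y S.

Let R := reach_set e (W :\: S) (B :\: S).
Let B' := (S :&: W) :|: R.
Let A' := (A :|: B) :\: B'.

Lemma reach_sub : R \subset W :\: S.
Proof. exact/reach_set_sub/setSD/B_sub_W. Qed.

Lemma reach_notin_Y v : v \in R -> v \notin Y.
Proof.
move=> /(reach_set_walk a)[p walk_p pBW]; apply/negP => vY.
have sub_vY : [set v] \subset Y by rewrite sub1set.
have := sepS (sub_walk (induced_subset (subsetDl W S)) (subsetDl B S) sub_vY walk_p).
by case/hasP=> w /pBW; rewrite !inE => /orP[] /andP[/negP wNS _] /wNS.
Qed.

Lemma boundary_sub : [set i in B' | [exists j in A', e i j]] \subset S :&: W.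
Proof.
apply/subsetP => i; rewrite inE => /andP[+ /existsP[j /andP[jA' eij]]].
rewrite inE => /orP[//|iR].
have /setDP[iW iNS] := subsetP reach_sub i iR.
have [ja | jNa] := eqVneq j a.
  by move: (reach_notin_Y iR); rewrite inE iW -ja eij.
have jW : j \in W by move: jA'; rewrite !inE jNa => /andP[_ ->].
have jNS : j \notin S.
  apply: contraL jA' => jS; rewrite in_setD negb_and negbK.
  by rewrite (subsetP (subsetUl (S :&: W) R)) // in_setI jS jW.
have jR : j \in R.
  by apply: (reach_set_edge (setSD S B_sub_W) iR _ eij); rewrite in_setD jNS jW.
by move: jA'; rewrite in_setD /B' in_setU jR orbT.
Qed.

Lemma cut_at_separator : B != set0 -> #|S| <= f ->
  exists A' B' : {set T},
    [/\ A' != set0 /\ B' != set0,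
        [disjoint A' & B'] /\ A' :|: B' = A :|: B,
        A' \subset A, B \subset B' &
        ~ reaches e f B' A'].
Proof.
move=> B0 small_S; exists A', B'.
have B_B' : B \subset B'.
  apply/subsetP => b bB; have bW := subsetP B_sub_W b bB.
  have [bS | bNS] := boolP (b \in S); first by rewrite in_setU in_setI bS bW.
  by rewrite in_setU (subsetP (sub_reach_set e (W :\: S) _)) ?orbT // in_setD bNS.
have B'_W : B' \subset W.
  by rewrite subUset subsetIr; apply: subset_trans reach_sub (subsetDl _ _).
have aA' : a \in A' by rewrite in_setD in_setU aA (contra (subsetP B'_W a) aNW).
split.
- split; apply/set0Pn; first by exists a.
  by have /set0Pn[b bB] := B0; exists b; apply: subsetP bB.
- split; first by have /subsetDP[] := subxx A'.
  apply/setP => v; rewrite in_setU in_setD; case: (boolP (v \in B')) => /= vB'; last first.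
    by rewrite orbF.
  by move/subsetP: B'_W => /(_ v vB'); rewrite in_setD1 => /andP[_ ->].
- apply/subsetP => v; rewrite in_setD in_setU => /andP[vNB' /orP[//|vB]].
  by move: vNB'; rewrite (subsetP B_B').
- exact: B_B'.
- rewrite /reaches => card_boundary.
  have := leq_trans card_boundary (subset_leq_card boundary_sub).
  by move/leq_trans/(_ (subset_leq_card (subsetIl S W))); rewrite ltnNge small_S.
Qed.

End CutAtSeparator.

End Cut.

Theorem lemma6 (T : finType) (e : rel T) (f : nat) (A B F : {set T}) :
  simple_digraph e ->
  condition1 e f ->
  [disjoint A & B] -> [disjoint A & F] -> [disjoint B & F] ->
  A :|: B :|: F = setT ->
  A != set0 -> B != set0 -> #|F| <= f ->
  ~ disj_reach e f B A F ->
  exists A' B' : {set T},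
    [/\ A' != set0 /\ B' != set0,
        [disjoint A' & B'] /\ A' :|: B' = A :|: B,
        A' \subset A, B \subset B' &
        ~ reaches e f B' A'].
Proof.
move=> _ _ dAB dAF dBF _ _ B0 _ no_paths.
have [a] := not_all_ex_not _ _ (fun all_paths => no_paths (or_intror all_paths)).
case/(imply_to_and (a \in A)) => aA no_paths_a.
pose W := (A :|: B) :\ a; pose Y := [set u in W | e u a].
have [S sepS small_S] : exists2 S, separator a (induced e W) B Y S & #|S| <= f.
  apply: NNPP => no_sep; apply: no_paths_a.
  have [|ps link] := @menger _ a (induced e W) B Y f.+1.
    by move=> S sepS; rewrite ltnNge; apply/negP => small_S; apply: no_sep; exists S.
  exact: (XY_paths_of_linkage aA dAB dAF dBF link).
exact: (cut_at_separator aA dAB sepS B0 small_S).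
Qed.
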